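(* In the homogeneous, resource-abundant setting ($N_k=N>0$ for all $k\in[n]$, $F\ge nN$), let $\boldsymbol O^*\in\mathbb R^{\mathcal N}$ have $O^*_{\mathcal N}=N/2$ and $O^*_i=0$ for $i<\mathcal N$. Let $\boldsymbol\varepsilon\in\mathbb R^{\mathcal N}$ satisfy $\varepsilon_i\ge0$ for all $i\in[\mathcal N]$ and $\boldsymbol O^*+\boldsymbol\varepsilon\in\Omega$. Then $$T(\boldsymbol\varepsilon)\le-\boldsymbol O^{*t}M\boldsymbol\varepsilon,$$ where $T(\boldsymbol\varepsilon)=\boldsymbol l^t\boldsymbol\varepsilon+\frac12\boldsymbol\varepsilon^tM\boldsymbol\varepsilon$.
   Context: Fix an integer $n\ge2$ and write $[m]=\{1,\dots,m\}$. Let $\mathcal X$ be the collection of subsets of $[n]$ with at least two elements, $\mathcal N=2^n-n-1$, and let $I:\mathcal X\to[\mathcal N]$ be a bijection such that $A\subsetneq B$ implies $I(A)<I(B)$ (so $I([n])=\mathcal N$). Write $f(c)=|I^{-1}(c)|$, $S(c)=\{i\in[\mathcal N]:I^{-1}(c)\subseteq I^{-1}(i)\}$, $B(c)=\{i\in[\mathcal N]:I^{-1}(i)\subsetneq I^{-1}(c)\}$, and for $k\in[n]$, $\tilde S(k)=\{i\in[\mathcal N]:k\in I^{-1}(i)\}$. With effective knowledges $N_k'=\min\{N_k,F\}$ (here all equal to $N$), the objective is $$T(\boldsymbol O)=\sum_{c=1}^{\mathcal N}\frac{\sum_{a\in S(c)}O_a}{\prod_{k\in I^{-1}(c)}N_k'}\Big(\sum_{k\in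 I^{-1}(c)}N_k'-f(c)\sum_{a\in S(c)}O_a-(f(c)-1)\sum_{a\in B(c)}O_a\Big),$$ and $\boldsymbol l$, $M$ (symmetric) are the unique vector and matrix with $T(\boldsymbol O)=\boldsymbol l^t\boldsymbol O+\frac12\boldsymbol O^tM\boldsymbol O$ on $\mathbb R^{\mathcal N}$. In the homogeneous resource-abundant setting the feasible region is $\Omega=\{\boldsymbol O\in\mathbb R^{\mathcal N}:\boldsymbol O\ge\boldsymbol 0,\ \sum_{i\in\tilde S(k)}O_i\le N\ \forall k\in[n]\}$ (the resource constraint $\sum_k N_k'-\sum_c(f(c)-1)O_c\le F$ holds automatically). *)

From HB Require Import structures.
From mathcomp Require Import all_boot all_order all_algebra.
From mathcomp Require Import reals.
Set Implicit Arguments. Unset Strict Implicit. Unset Printing Implicit Defensive.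
Import Order.TTheory GRing.Theory Num.Theory.
Local Open Scope ring_scope.

(* calN = 2^n - n - 1 : number of subsets of [n] with at least 2 elements *)
Definition calN (n : nat) : nat := (2 ^ n - n - 1)%N.

Section Model.
Variables (R : realType) (n Nc : nat).
(* J plays the role of I^{-1} : [calN] -> X ; indices are 'I_Nc (0-based) *)
Variable J : 'I_Nc -> {set 'I_n}.

Definition index_bijection : Prop :=
  [/\ injective J,
      (forall c, 2 <= #|J c|)%N,
      (forall A : {set 'I_n}, 2 <= #|A| -> exists c, J c = A)%N
    & (forall a b : 'I_Nc, J a \proper J b -> (a < b)%N)].

Definition f_ (c : 'I_Nc) : nat := #|J c|.
Definition S_ (c : 'I_Nc) : {set 'I_Nc} := [set i | J c \subset J i].
Definition B_ (c : 'I_Nc) : {set 'I_Nc} := [set i | J i \proper J c].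
Definition St_ (k : 'I_n) : {set 'I_Nc} := [set i | k \in J i].

Definition T_obj (Nk' : 'I_n -> R) (O : 'cV[R]_Nc) : R :=
  \sum_(c < Nc)
    (\sum_(a in S_ c) O a 0) / (\prod_(k in J c) Nk' k) *
    ( \sum_(k in J c) Nk' k
      - (f_ c)%:R * (\sum_(a in S_ c) O a 0)
      - ((f_ c)%:R - 1) * (\sum_(a in B_ c) O a 0)).

Definition Omega (N : R) (O : 'cV[R]_Nc) : Prop :=
  (forall i, 0 <= O i 0) /\ (forall k : 'I_n, \sum_(i in St_ k) O i 0 <= N).

(* O* : O*_{calN} = N/2, other coordinates 0 (last index is Nc.-1, 0-based) *)
Definition Ostar (N : R) : 'cV[R]_Nc :=
  \col_(i < Nc) (if (i : nat) == Nc.-1 then N / 2 else 0).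

End Model.

From HB Require Import structures.
From mathcomp Require Import all_boot all_order all_algebra.
From mathcomp Require Import reals.
From mathcomp Require Import ring lra.
Set Implicit Arguments. Unset Strict Implicit.
Import Order.TTheory GRing.Theory Num.Theory.
Local Open Scope ring_scope.

(* Since [I^-1(calN) = [n]], the point [O*] contributes [N/2] to every sum
   [\sum_(a in S c) O a] and nothing to every [\sum_(a in B c) O a].  Hence
   each term of [T] at [O* + eps] is the term at [O*] with [N/2] replaced by
   [N/2 + s], [s >= 0], plus a nonpositive [B]-correction, and a one-variable
   computation shows [T (O* + eps) <= T O*].  Expanding the quadratic form,
   [T (O* + eps) = T O* + T eps + O*^t M eps], which gives the claim. *)

Section QuadraticForm.
Variables (R : comNzRingType) (m : nat) (M : 'M[R]_m).
Hypothesis M_sym : M^T = M.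

Lemma bilinear_form_sym (a b : 'cV[R]_m) :
  (b^T *m M *m a) 0 0 = (a^T *m M *m b) 0 0.
Proof.
rewrite -[in RHS](trmxK (a^T *m M *m b)) [RHS]mxE.
by rewrite !trmx_mul trmxK M_sym mulmxA.
Qed.

Lemma quadratic_formD (a b : 'cV[R]_m) :
  ((a + b)^T *m M *m (a + b)) 0 0 =
  (a^T *m M *m a) 0 0 + (b^T *m M *m b) 0 0 + 2 * (a^T *m M *m b) 0 0.
Proof.
have addE (A B : 'M[R]_1) : (A + B) 0 0 = A 0 0 + B 0 0 by rewrite mxE.
have trD : (a + b)^T = a^T + b^T by apply/matrixP => i j; rewrite !mxE.
rewrite trD !mulmxDl !mulmxDr !addE bilinear_form_sym.
ring.
Qed.

End QuadraticForm.

Lemma full_index_last (n Nc : nat) (J : 'I_Nc -> {set 'I_n}) (c0 : 'I_Nc) :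
  injective J -> (forall a b, J a \proper J b -> (a < b)%N) ->
  J c0 = setT -> val c0 = Nc.-1.
Proof.
move=> Jinj Jord Jc0.
have Nc_gt0 : (0 < Nc)%N by apply: leq_ltn_trans (ltn_ord c0).
have lastNc : (Nc.-1 < Nc)%N by rewrite prednK.
apply/eqP; rewrite eqn_leq -ltnS prednK // ltn_ord /= leqNgt; apply/negP => lt_c0.
have proper_last : J (Ordinal lastNc) \proper J c0.
  rewrite Jc0 properT -Jc0; apply: contraTneq lt_c0 => /Jinj <-.
  by rewrite ltnn.
by have := ltn_trans (Jord _ _ proper_last) lt_c0; rewrite ltnn.
Qed.

Lemma sum_Ostar (R : realType) (Nc : nat) (N : R) (c0 : 'I_Nc)
  (A : {set 'I_Nc}) : val c0 = Nc.-1 ->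
  \sum_(a in A) Ostar Nc N a 0 = if c0 \in A then N / 2 else 0.
Proof.
move=> c0_last.
have OstarE (a : 'I_Nc) : Ostar Nc N a 0 = if a == c0 then N / 2 else 0.
  by rewrite /Ostar mxE -c0_last.
rewrite (eq_bigr _ (fun a _ => OstarE a)).
case: (boolP (c0 \in A)) => c0A.
  by rewrite (bigD1 c0) //= eqxx big1 ?addr0 // => a /andP[_ /negbTE ->].
by rewrite big1 // => a aA; case: eqP => // ac; rewrite -ac aA in c0A.
Qed.

Lemma perturbed_term_le (R : realType) (N s b x P : R) :
  0 < N -> 0 < P -> 1 <= x -> 0 <= s -> 0 <= b ->
  (N / 2 + s) / P * (x * N - x * (N / 2 + s) - (x - 1) * b)
  <= N / 2 / P * (x * N - x * (N / 2)).
Proof.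
move=> N0 P0 x1 s0 b0.
rewrite mulrAC [X in _ <= X]mulrAC; apply: ler_wpM2r; first by rewrite invr_ge0 ltW.
rewrite -subr_ge0.
have -> : N / 2 * (x * N - x * (N / 2)) -
   (N / 2 + s) * (x * N - x * (N / 2 + s) - (x - 1) * b)
   = x * (s * s) + (x - 1) * ((N / 2 + s) * b) by field.
by rewrite addr_ge0 // !mulr_ge0 //; lra.
Qed.

Section ObjectiveAtOstar.
Variables (R : realType) (n Nc : nat) (J : 'I_Nc -> {set 'I_n}) (c0 : 'I_Nc).
Hypotheses (J_full : J c0 = setT) (c0_last : val c0 = Nc.-1).
Hypothesis f_ge1 : forall c, (1 <= f_ J c)%N.

Lemma T_obj_Ostar_addr_le (N : R) (eps : 'cV[R]_Nc) :
  0 < N -> (forall i, 0 <= eps i 0) ->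
  T_obj J (fun _ => N) (Ostar Nc N + eps) <= T_obj J (fun _ => N) (Ostar Nc N).
Proof.
move=> N0 eps_ge0; apply: ler_sum => c _.
have sumS : \sum_(a in S_ J c) Ostar Nc N a 0 = N / 2.
  by rewrite (sum_Ostar N _ c0_last) inE J_full subsetT.
have sumB : \sum_(a in B_ J c) Ostar Nc N a 0 = 0.
  by rewrite (sum_Ostar N _ c0_last) inE J_full properE subsetT andbF.
have sumS_eps : \sum_(a in S_ J c) (Ostar Nc N + eps) a 0
                = N / 2 + \sum_(a in S_ J c) eps a 0.
  by under eq_bigr do rewrite mxE; rewrite big_split /= sumS.
have sumB_eps : \sum_(a in B_ J c) (Ostar Nc N + eps) a 0
                = \sum_(a in B_ J c) eps a 0.
  by under eq_bigr do rewrite mxE; rewrite big_split /= sumB add0r.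
rewrite sumS_eps sumB_eps sumS sumB sumr_const prodr_const mulr0 subr0.
rewrite -[N *+ _]mulr_natl -/(f_ J c).
apply: perturbed_term_le => //; first by rewrite exprn_gt0.
- by rewrite ler1n f_ge1.
- exact: sumr_ge0.
- exact: sumr_ge0.
Qed.

End ObjectiveAtOstar.

Theorem mainTheorem3 (R : realType) (n : nat) (J : 'I_(calN n) -> {set 'I_n})
  (N F : R) (l : 'cV[R]_(calN n)) (M : 'M[R]_(calN n)) (eps : 'cV[R]_(calN n)) :
  (2 <= n)%N ->
  index_bijection J ->
  0 < N ->
  n%:R * N <= F ->
  M^T = M ->
  (forall O : 'cV[R]_(calN n),
     T_obj J (fun _ => Num.min N F) O
     = (l^T *m O) 0 0 + 1 / 2 * (O^T *m M *m O) 0 0) ->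
  (forall i, 0 <= eps i 0) ->
  Omega J N (Ostar (calN n) N + eps) ->
  T_obj J (fun _ => Num.min N F) eps <= - ((Ostar (calN n) N)^T *m M *m eps) 0 0.
Proof.
move=> n2 [Jinj J2 Jsurj Jord] N0 NF M_sym T_quad eps_ge0 _.
have [c0 J_full] : exists c, J c = setT by apply: Jsurj; rewrite cardsT card_ord.
have c0_last := full_index_last Jinj Jord J_full.
have minNF : Num.min N F = N.
  apply: min_l; apply: le_trans NF; apply: ler_peMl; first exact: ltW.
  by rewrite ler1n (leq_trans _ n2).
rewrite minNF in T_quad *.
set Os := Ostar (calN n) N.
have T_le := T_obj_Ostar_addr_le J_full c0_last
  (fun c => leq_trans (isT : (1 <= 2)%N) (J2 c)) N0 eps_ge0.
have T_linD : (l^T *m (Os + eps)) 0 0 = (l^T *m Os) 0 0 + (l^T *m eps) 0 0.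
  by rewrite mulmxDr mxE.
move: T_le; rewrite !T_quad T_linD quadratic_formD //.
lra.
Qed.
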